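(* Let $P$ be a 6-stack. Then $P$ has a proper retract which (with the induced order) is isomorphic to a tower of sections if and only if $r(P)$ is a multiple of $3$. Consequently, $P$ is minimal automorphic if and only if $r(P)$ is not a multiple of $3$.
   Context: All posets are finite. For a poset $P$ and $p\in P$, the rank $r(p)$ of $p$ is the largest $m$ such that there is a chain $p_0<\dots<p_m=p$ in $P$. $P$ is ranked of rank $r(P)$ if every maximal chain has exactly $r(P)+1$ elements. For $0\le i\le j$, $P(i,j)=\{p\in P:i\le r(p)\le j\}$ (induced order). A subset $Q\subseteq P$ (induced order) is a retract of $P$ if there is an order-preserving $f:P\to Q$ with $f(q)=q$ for all $q\in Q$; it is proper if $Q\neq P$. The 6-crown $C_6$ is the poset on $\{x_0,x_1,x_2,y_0,y_1,y_2\}$ whose only strict comparabilities are $x_0<y_0>x_1<y_1>x_2<y_2>x_0$. A 6-stack is a ranked poset $P$ of rank $n\ge1$ such that $P(i,i+1)\cong C_6$ for each $0\le i<n$. The ordinal sum of posets $P_1,\dots,P_k$ ($k\ge1$) is their disjoint union ordered by the orders of the $P_i$ together with $p<q$ whenever $p\in P_i,q\in P_j,i<j$. A section is either a two-element antichain or a poset on the set $\{[i,k]: 0\le i\le 2,\ 0\le k\le n\}$ (with $3(n+1)$ distinct elements), for some $n\ge 1$, such that: (1) $[i,k]<[i,l]$ whenever $0\le k<l\le n$; (2) for each $k$, $\{[0,k],[1,k],[2,k]\}$ is an antichain; (3) $[i,k]<[j,l]$ implies $[i+1,k]<[j+1,l]$ (first indices mod $3$); (4) for each $0\le k<n$ there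 are $i,j$ with $[i,k]\not<[j,k+1]$. A tower of sections is an ordinal sum of one or more sections. A poset is automorphic if it has an automorphism with no fixed point; it is minimal automorphic if it is automorphic and no proper retract of it is automorphic. *)

(* Finite posets are represented by a finType T together with
   a strict order relation lt : rel T (irreflexive, transitive). *)
From mathcomp Require Import all_boot.
Set Implicit Arguments. Unset Strict Implicit. Unset Printing Implicit Defensive.

Section PosetDefs.
Variable T : finType.
Variable lt : rel T.

Definition is_spo : Prop :=
  (forall x, ~~ lt x x) /\ (forall x y z, lt x y -> lt y z -> lt x z).

Definition leP (x y : T) : bool := (x == y) || lt x y.

Definition chainb (p : T) (m : nat) : bool :=
  [exists t : (m.+1).-tuple T, sorted lt t && (last p t == p)].

(* r(p) = the largest such m (chains in a finite strict order have
   at most #|T| elements, so m ranges below #|T|.+1) *)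
Definition rank (p : T) : nat := \max_(m < #|T|.+1 | chainb p m) m.

Definition is_chain (C : {set T}) : Prop :=
  {in C &, forall x y, leP x y || leP y x}.
Definition is_maxchain (C : {set T}) : Prop :=
  is_chain C /\ forall D : {set T}, is_chain D -> C \subset D -> D = C.

Definition ranked (n : nat) : Prop :=
  forall C : {set T}, is_maxchain C -> #|C| = n.+1.

Definition rank_slice (i j : nat) : {set T} :=
  [set p | (i <= rank p) && (rank p <= j)].

Definition is_retract (Q : {set T}) : Prop :=
  exists f : T -> T,
    (forall x y, leP x y -> leP (f x) (f y)) /\
    (forall x, f x \in Q) /\ {in Q, forall q, f q = q}.

Definition automorphic_on (A : {set T}) : Prop :=
  exists f : T -> T,
    {in A, forall x, f x \in A} /\
    {in A &, injective f} /\
    {in A, forall y, exists2 x, x \in A & f x = y} /\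
    {in A &, forall x y, lt x y = lt (f x) (f y)} /\
    {in A, forall x, f x != x}.

Definition automorphic : Prop := automorphic_on [set: T].

Definition minimal_automorphic : Prop :=
  automorphic /\
  forall Q : {set T}, Q != [set: T] -> is_retract Q -> ~ automorphic_on Q.

End PosetDefs.

Definition iso_on (T S : finType) (lt : rel T) (A : {set T}) (ltS : rel S) : Prop :=
  exists f : T -> S,
    {in A &, injective f} /\
    (forall s, exists2 x, x \in A & f x = s) /\
    {in A &, forall x y, lt x y = ltS (f x) (f y)}.

(* The 6-crown on 'I_3 * bool: (i,false) = x_i, (i,true) = y_i;
   x_j < y_i iff j = i or j = i+1 (mod 3). *)
Definition c6_lt (a b : 'I_3 * bool) : bool :=
  ~~ a.2 && b.2 && ((a.1 == b.1) || (val a.1 == (val b.1).+1 %% 3)).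

Definition six_stack (T : finType) (lt : rel T) (n : nat) : Prop :=
  ranked lt n /\ 1 <= n /\
  forall i, i < n -> iso_on lt (rank_slice lt i i.+1) c6_lt.

(* sections: either a two-element antichain, or a poset on
   {[i,k] : 0<=i<=2, 0<=k<=n} (labelled bijectively by g) with (1)-(4) *)
Definition is_section (S : finType) (lt : rel S) : Prop :=
  is_spo lt /\
  ((#|S| = 2 /\ forall x y, ~~ lt x y) \/
   exists n, 1 <= n /\
   exists g : 'I_3 * 'I_n.+1 -> S,
     bijective g /\
     (forall (i : 'I_3) (k l : 'I_n.+1), k < l -> lt (g (i, k)) (g (i, l))) /\
     (forall (k : 'I_n.+1) (i j : 'I_3), ~~ lt (g (i, k)) (g (j, k))) /\
     (forall (i j : 'I_3) (k l : 'I_n.+1),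
        lt (g (i, k)) (g (j, l)) -> lt (g (ordS i, k)) (g (ordS j, l))) /\
     (forall k : 'I_n, exists i j : 'I_3,
        ~~ lt (g (i, widen_ord (leqnSn n) k)) (g (j, lift ord0 k)))).

Definition ordsum_lt (k : nat) (S : 'I_k -> finType) (lts : forall i, rel (S i))
    (a b : {i : 'I_k & S i}) : bool :=
  (tag a < tag b) || ((tag b == tag a) && lts (tag a) (tagged a) (tagged_as a b)).

Definition iso_tower_of_sections (T : finType) (lt : rel T) (A : {set T}) : Prop :=
  exists k : nat, 1 <= k /\
  exists (S : 'I_k -> finType) (lts : forall i, rel (S i)),
    (forall i, is_section (lts i)) /\ iso_on lt A (ordsum_lt lts).

From Pilot Require Import Defs.
From mathcomp Require Import all_boot perm zify.
Set Implicit Arguments. Unset Strict Implicit. Unset Printing Implicit Defensive.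

(* A 6-stack of rank n is isomorphic to the poset on [0,2] x [0,n] where
   (a,i) < (b,j) iff j >= i + 2, or j = i + 1 and a <> b: two consecutive ranks
   form a crown, in which each upper element misses exactly one lower element,
   and the colour of an element is read off at rank 0 by repeatedly passing to
   the missed element.  Rotating the colours is a fixed-point-free automorphism.
   If 3 divides n, keeping colours 0, 1 on the ranks divisible by 3 and colour 2
   on the other ranks gives a proper retract which is an ordinal sum of
   two-element antichains.  Conversely, a retraction followed by a
   fixed-point-free automorphism of the retract is a fixed-point-free
   order-preserving map h of the whole stack.  Such an h moves an element inside
   its rank or to the same colour one rank up or down, and order preservation
   between consecutive ranks makes the moves of successive ranks a finite
   automaton; running it from the bottom and from the top shows that, when 3
   does not divide n, h rotates every rank, so it is onto and the retract is
   the whole stack.  Towers of sections are automorphic by rotating or swapping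
   each section, which gives both equivalences. *)

(** * Ranks *)

Section Rank.
Variables (T : finType) (lt : rel T).
Hypothesis lt_irr : irreflexive lt.
Hypothesis lt_trans : transitive lt.

Lemma chainbP p m :
  reflect (exists2 s : seq T, size s = m & sorted lt (rcons s p)) (chainb lt p m).
Proof.
apply: (iffP existsP) => [[t /andP[st /eqP tp]]|[s sz ss]].
  move: (size_tuple t) st tp; case/lastP: (tval t) => [|s z] //=.
  by rewrite last_rcons size_rcons => -[sz] ss zp; subst z; exists s.
have szt : size (rcons s p) == m.+1 by rewrite size_rcons sz.
by exists (Tuple szt); rewrite /= ss last_rcons eqxx.
Qed.

Lemma sorted_size_le_card (s : seq T) : sorted lt s -> size s <= #|T|.
Proof.
move=> ss; have /card_uniqP <- : uniq s by apply: sorted_uniq ss.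
exact: max_card.
Qed.

Lemma chainb_le_rank p m : chainb lt p m -> m <= rank lt p.
Proof.
move=> c; have m_lt : m < #|T|.+1.
  case/chainbP: c => s sz /sorted_size_le_card; rewrite size_rcons sz; lia.
exact: (@leq_bigmax_cond _ (fun i : 'I_#|T|.+1 => chainb lt p i) val (Ordinal m_lt)).
Qed.

Lemma rank_chain p :
  exists2 s : seq T, size s = rank lt p & sorted lt (rcons s p).
Proof.
apply/chainbP; have : 0 < #|(fun i : 'I_#|T|.+1 => chainb lt p i)|.
  by apply/card_gt0P; exists ord0; rewrite /in_mem /=; apply/chainbP; exists [::].
by case/(eq_bigmax_cond val) => i ci; rewrite /rank => ->.
Qed.

Lemma rank_lt x y : lt x y -> rank lt x < rank lt y.
Proof.
move=> xy; have [s sz ss] := rank_chain x; apply: chainb_le_rank; apply/chainbP.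
exists (rcons s x); first by rewrite size_rcons sz.
case: s ss {sz} => [|a s] /=; first by rewrite xy.
by rewrite !rcons_path => -> /=; rewrite last_rcons xy.
Qed.

Lemma rank_pred y : 0 < rank lt y ->
  exists2 z, lt z y & rank lt z = (rank lt y).-1.
Proof.
have [s sz ss] := rank_chain y; case/lastP: s sz ss => [<- //|s z].
rewrite size_rcons => sz ss _.
have zs : sorted lt (rcons s z) by move: ss; rewrite -cats1 => /cat_sorted2[].
have zy : lt z y.
  by move: ss; rewrite -!cats1 -catA => /cat_sorted2[_] /= /andP[].
exists z => //; apply/eqP; rewrite eqn_leq -sz /= chainb_le_rank ?andbT.
  by have := rank_lt zy; rewrite -sz; lia.
by apply/chainbP; exists s.
Qed.

Definition is_chainb (D : {set T}) : bool :=
  [forall y in D, forall z in D, Defs.leP lt y z || Defs.leP lt z y].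

Lemma is_chainP (D : {set T}) : reflect (is_chain lt D) (is_chainb D).
Proof.
apply: (iffP forall_inP) => [cD y z yD zD|cD y yD]; first exact: (forall_inP (cD y yD)) z zD.
by apply/forall_inP => z zD; apply: cD.
Qed.

Lemma sorted_is_chain s : sorted lt s -> is_chain lt [set z in s].
Proof.
rewrite sorted_pairwise // => ps y z; rewrite !inE; elim: s ps => //= a s IH /andP[/allP as_ ps].
rewrite !inE /Defs.leP => /orP[/eqP->|ys] /orP[/eqP->|zs].
- by rewrite eqxx.
- by rewrite as_ ?orbT.
- by rewrite as_ ?orbT.
- exact: IH.
Qed.

Lemma chain_sub_maxchain C : is_chain lt C -> exists2 D, is_maxchain lt D & C \subset D.
Proof.
move=> /is_chainP cC; have CC : is_chainb C && (C \subset C) by rewrite cC subxx.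
have [D /andP[/is_chainP cD CD] Dmax] :=
  @arg_maxnP _ C (fun D => is_chainb D && (C \subset D)) (fun D => #|D|) CC.
exists D => //; split=> // E cE DE; apply/eqP; rewrite eq_sym eqEcard DE /=.
by apply: Dmax; rewrite (subset_trans CD DE) andbT; apply/is_chainP.
Qed.

Lemma ranked_rank_le n : ranked lt n -> forall x, rank lt x <= n.
Proof.
move=> rkd x; have [s sz ss] := rank_chain x.
have [D mD sD] := chain_sub_maxchain (sorted_is_chain ss).
have := subset_leq_card sD; rewrite (rkd D mD) cardsE.
by rewrite (card_uniqP (sorted_uniq lt_trans lt_irr ss)) size_rcons sz.
Qed.

End Rank.

(** * Coordinates on a 6-stack *)

Lemma ordS3K (c : 'I_3) : ordS (ordS (ordS c)) = c.
Proof. by apply/val_inj; case: c => [[|[|[|]]] ?]. Qed.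

Lemma ordS3_neq (c : 'I_3) : ordS c != c.
Proof. by case: c => [[|[|[|]]] ?]. Qed.

Lemma ordS3_inj : injective (@ordS 3).
Proof. by move=> a b e; rewrite -(ordS3K a) -(ordS3K b) e. Qed.

Lemma ord3_avoid (a b : 'I_3) : exists2 c : 'I_3, c != a & c != b.
Proof.
case: a => [[|[|[|]]] ?] //; case: b => [[|[|[|]]] ?] //;
  first [by exists ord0 | by exists (@Ordinal 3 1 isT) | by exists ord_max].
Qed.

Lemma c6_lt_level a b : c6_lt a b -> (a.2, b.2) = (false, true).
Proof. by case: a b => [? [] ] [? [] ]. Qed.

Lemma c6_ltNE (c j : 'I_3) : ~~ c6_lt (c, false) (j, true) = (c == ordS (ordS j)).
Proof. by case: j => [[|[|[|]]] ?] //; case: c => [[|[|[|]]] ?]. Qed.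

Section CrownSlice.
Variables (T : finType) (lt : rel T).
Hypothesis lt_irr : irreflexive lt.
Hypothesis lt_trans : transitive lt.
Variables (k : nat) (f : T -> 'I_3 * bool).
Local Notation S := (rank_slice lt k k.+1).
Hypothesis f_inj : {in S &, injective f}.
Hypothesis f_surj : forall s, exists2 x, x \in S & f x = s.
Hypothesis f_lt : {in S &, forall x y, lt x y = c6_lt (f x) (f y)}.

Lemma slice_level x : x \in S -> (f x).2 = (rank lt x == k.+1).
Proof.
move=> xS; have /[!inE] /andP[kx xk] := xS; case: eqP => [rx|/eqP rx].
  have [z zx rz] : exists2 z, lt z x & rank lt z = (rank lt x).-1.
    by apply: rank_pred; rewrite ?rx.
  have zS : z \in S by rewrite inE rz rx /= leqnn leqnSn.
  by move: zx; rewrite f_lt // => /c6_lt_level [].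
case fx: (f x).2 => //; have [z zS fz] := f_surj ((f x).1, false).
have : lt z x by rewrite f_lt // fz; case: (f x) fx => a [] //= _; rewrite /c6_lt /= eqxx.
move/(rank_lt lt_irr lt_trans); move: zS; rewrite inE; lia.
Qed.

Lemma slice_label (a : 'I_3) (b : bool) : exists2 x, rank lt x = k + b & f x = (a, b).
Proof.
have [x xS fx] := f_surj (a, b); exists x => //.
have := slice_level xS; rewrite fx /=; move: xS; rewrite inE; case: (b); case: eqP; lia.
Qed.

Lemma slice_fE x : x \in S -> f x = ((f x).1, rank lt x == k.+1).
Proof. by move=> xS; rewrite -slice_level //; case: (f x). Qed.

Lemma slice_label_inj x x' : x \in S -> rank lt x = rank lt x' ->
  (f x).1 = (f x').1 -> x = x'.
Proof.
move=> xS rxx' fxx'; have x'S : x' \in S by move: xS; rewrite !inE rxx'.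
apply: f_inj => //; by rewrite slice_fE // [f x']slice_fE // fxx' rxx'.
Qed.

Lemma slice_ltNE x y : rank lt x = k -> rank lt y = k.+1 ->
  ~~ lt x y = ((f x).1 == ordS (ordS (f y).1)).
Proof.
move=> rx ry; have xS : x \in S by rewrite inE rx leqnn leqnSn.
have yS : y \in S by rewrite inE ry leqnn leqnSn.
rewrite f_lt // slice_fE // [f y]slice_fE // rx ry eqxx.
by rewrite (_ : k == k.+1 = false) ?c6_ltNE //; lia.
Qed.

End CrownSlice.

Definition stack_lt (a i b j : nat) : bool := (i.+2 <= j) || (j == i.+1) && (a != b).

Definition stack_coords (T : finType) (lt : rel T) (n : nat)
    (cl : T -> 'I_3) (rk : T -> nat) : Prop :=
  [/\ forall x, rk x <= n,
      forall x y, rk x = rk y -> cl x = cl y -> x = y,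
      forall (a : 'I_3) k, k <= n -> exists2 x, rk x = k & cl x = a
    & forall x y, lt x y = stack_lt (cl x) (rk x) (cl y) (rk y)].

Section SixStack.
Variables (T : finType) (lt : rel T) (n : nat).
Hypothesis lt_irr : irreflexive lt.
Hypothesis lt_trans : transitive lt.
Hypothesis rank_le : forall x, rank lt x <= n.
Hypothesis slice_iso : forall i, i < n -> iso_on lt (rank_slice lt i i.+1) c6_lt.
Variable f0 : T -> 'I_3 * bool.
Hypothesis f0_inj : {in rank_slice lt 0 1 &, injective f0}.
Hypothesis f0_surj : forall s, exists2 x, x \in rank_slice lt 0 1 & f0 x = s.
Hypothesis f0_lt : {in rank_slice lt 0 1 &, forall x y, lt x y = c6_lt (f0 x) (f0 y)}.

Local Notation rk := (rank lt).

Lemma slice_iso_below y : 0 < rk y ->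
  iso_on lt (rank_slice lt (rk y).-1 (rk y).-1.+1) c6_lt.
Proof. by move=> y_gt0; apply: slice_iso; have := rank_le y; lia. Qed.

Definition gap (y : T) : T := odflt y [pick z | (rk z == (rk y).-1) && ~~ lt z y].

Lemma gap_spec y : 0 < rk y -> rk (gap y) = (rk y).-1 /\ ~~ lt (gap y) y.
Proof.
move=> y_gt0; have [f [fi [fs fl]]] := slice_iso_below y_gt0.
have ry : rk y = ((rk y).-1).+1 by lia.
have [x rx fx] := slice_label lt_irr lt_trans fs fl (ordS (ordS (f y).1)) false.
rewrite /= addn0 in rx; rewrite /gap; case: pickP => [z /andP[/eqP -> //]|/(_ x)].
by rewrite rx eqxx (slice_ltNE lt_irr lt_trans fs fl rx ry) fx /= eqxx.
Qed.

Lemma gap_uniq y z : 0 < rk y -> rk z = (rk y).-1 -> ~~ lt z y -> z = gap y.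
Proof.
move=> y_gt0 rz nzy; have [f [fi [fs fl]]] := slice_iso_below y_gt0.
have ry : rk y = ((rk y).-1).+1 by lia.
have [rg ngy] := gap_spec y_gt0.
have zS : z \in rank_slice lt (rk y).-1 (rk y).-1.+1 by rewrite inE rz leqnn leqnSn.
apply: (slice_label_inj lt_irr lt_trans fi fs fl zS); first by rewrite rg.
move: nzy ngy; rewrite (slice_ltNE lt_irr lt_trans fs fl rz ry).
by rewrite (slice_ltNE lt_irr lt_trans fs fl rg ry) => /eqP -> /eqP ->.
Qed.

Lemma gap_inj y y' : rk y = rk y' -> 0 < rk y -> gap y = gap y' -> y = y'.
Proof.
move=> ryy' y_gt0 gyy'; have [f [fi [fs fl]]] := slice_iso_below y_gt0.
have ry : rk y = ((rk y).-1).+1 by lia.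
have ry' : rk y' = ((rk y).-1).+1 by lia.
have y'_gt0 : 0 < rk y' by rewrite -ryy'.
have [rg ngy] := gap_spec y_gt0; have [_ ngy'] := gap_spec y'_gt0.
have yS : y \in rank_slice lt (rk y).-1 (rk y).-1.+1 by rewrite inE -ry leq_pred leqnn.
apply: (slice_label_inj lt_irr lt_trans fi fs fl yS ryy'); apply: ordS3_inj; apply: ordS3_inj.
move: ngy ngy'; rewrite -gyy' (slice_ltNE lt_irr lt_trans fs fl rg ry).
by rewrite (slice_ltNE lt_irr lt_trans fs fl rg ry') => /eqP <- /eqP.
Qed.

Lemma gap_surj x : rk x < n -> exists2 y, rk y = (rk x).+1 & gap y = x.
Proof.
move=> x_lt; have [f [fi [fs fl]]] := slice_iso x_lt.
have [y ry fy] := slice_label lt_irr lt_trans fs fl (ordS (f x).1) true.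
rewrite addn1 in ry; exists y => //; apply/esym/gap_uniq; rewrite ?ry //.
by rewrite (slice_ltNE lt_irr lt_trans fs fl (erefl _) ry) fy ordS3K.
Qed.

Definition colour (x : T) : 'I_3 := (f0 (iter (rk x) gap x)).1.

Lemma colour_gap y : 0 < rk y -> colour (gap y) = colour y.
Proof.
move=> y_gt0; have [rg _] := gap_spec y_gt0; rewrite /colour rg.
by case: (rk y) y_gt0 => //= k _; rewrite -iterSr.
Qed.

Lemma colour_inj x x' : rk x = rk x' -> colour x = colour x' -> x = x'.
Proof.
elim: {x}(rk x) {-2}x (erefl (rk x)) x' => [|k IH] x rx x' rxx' cxx'.
  have xS : x \in rank_slice lt 0 1 by rewrite inE rx.
  apply: (slice_label_inj lt_irr lt_trans f0_inj f0_surj f0_lt xS); first by rewrite -rxx'.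
  by move: cxx'; rewrite /colour -rxx' rx.
have x_gt0 : 0 < rk x by rewrite rx.
have x'_gt0 : 0 < rk x' by rewrite -rxx'.
apply: (gap_inj rxx' x_gt0); have [rg _] := gap_spec x_gt0; have [rg' _] := gap_spec x'_gt0.
apply: IH; first by rewrite rg rx.
  by rewrite rg rg' rxx'.
by rewrite !colour_gap // -rxx'.
Qed.

Lemma colour_surj (a : 'I_3) k : k <= n -> exists2 x, rk x = k & colour x = a.
Proof.
elim: k => [|k IH] kn.
  have [x rx fx] := slice_label lt_irr lt_trans f0_surj f0_lt a false.
  by exists x; rewrite /colour rx ?fx.
have [x rx cx] := IH (ltnW kn); have [|y ry gy] := gap_surj (_ : rk x < n); first by rewrite rx.
by exists y; rewrite ?ry ?rx // -(colour_gap (_ : 0 < rk y)) ?ry // gy.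
Qed.

Lemma lt_rank_succ x y k : rk x = k -> rk y = k.+1 -> lt x y = (colour x != colour y).
Proof.
move=> <- ry; have y_gt0 : 0 < rk y by rewrite ry.
have [rg ngy] := gap_spec y_gt0; rewrite -(colour_gap y_gt0).
apply/idP/idP => [xy|cxg].
  by apply: contraNneq ngy => cxg; rewrite -(colour_inj _ cxg) // rg ry.
by apply: contraNT cxg => nxy; rewrite -(gap_uniq y_gt0 _ nxy) ?ry.
Qed.

Lemma lt_rank_far x y : (rk x).+2 <= rk y -> lt x y.
Proof.
move=> xy; have [k ry] : exists k, rk y = k.+1 by exists (rk y).-1; lia.
elim: k y ry xy => [|k IH] y ry xy; first by lia.
have [c cx cy] := ord3_avoid (colour x) (colour y).
have [|z rz cz] := colour_surj c (_ : k.+1 <= n); first by have := rank_le y; lia.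
have zy : lt z y by rewrite (lt_rank_succ rz ry) cz.
suff xz : lt x z by exact: lt_trans xz zy.
case: (ltngtP (rk x).+2 k.+2) => [xk|xk|[rx]]; first by apply: IH; rewrite ?rz.
  by lia.
by rewrite (lt_rank_succ rx rz) cz eq_sym.
Qed.

Lemma six_stack_lt x y : lt x y = stack_lt (colour x) (rk x) (colour y) (rk y).
Proof.
rewrite /stack_lt; case: (leqP (rk x).+2 (rk y)) => [/lt_rank_far -> //|xy].
case: (eqVneq (rk y) (rk x).+1) => [/(lt_rank_succ (erefl _)) ->//|ne] /=.
by apply/negbTE/negP => /(rank_lt lt_irr lt_trans); lia.
Qed.

End SixStack.

Lemma six_stack_coords (T : finType) (lt : rel T) (n : nat) :
  is_spo lt -> six_stack lt n -> exists cl, stack_coords lt n cl (rank lt).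
Proof.
move=> [lt_irr' lt_trans'] [rkd [n_gt0 slice_iso]].
have lt_irr : irreflexive lt by move=> x; apply/negbTE.
have lt_trans : transitive lt by move=> y x z; apply: lt_trans'.
have rank_le := ranked_rank_le lt_irr lt_trans rkd.
have [f0 [f0_inj [f0_surj f0_lt]]] := slice_iso 0 n_gt0.
exists (colour lt f0); split.
- exact: rank_le.
- exact: colour_inj.
- exact: colour_surj.
- exact: six_stack_lt.
Qed.

(** * Moves of a fixed-point-free map as a finite automaton *)

Definition stack_le (a i b j : nat) : bool := (a == b) && (i == j) || stack_lt a i b j.

Lemma stack_le_addr a i b j p : stack_le a (i + p) b (j + p) = stack_le a i b j.
Proof. by rewrite /stack_le /stack_lt eqn_add2r -!addSn leq_add2r eqn_add2r. Qed.

(* A fixed-point-free order-preserving self-map of the stack moves an element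
   of colour a either to another colour c < 3 of the same rank (code c), or to
   colour a one rank up (code 3) or one rank down (code 4). *)
Definition code_colour (c a : nat) : nat := if c < 3 then c else a.
Definition code_rank (c : nat) : nat := if c < 3 then 1 else if c == 3 then 2 else 0.

Definition code_ok (c a : nat) : bool := (c < 5) && (c != a).

(* The codes of the three elements of one rank, listed by colour. *)
Definition state_ok (s : seq nat) : bool :=
  (size s == 3) && all (fun a => code_ok (nth 0 s a) a) (iota 0 3).

(* Order preservation on pairs x < y of consecutive ranks and distinct
   colours, with lower state s and upper state t. *)
Definition states_compat (s t : seq nat) : bool :=
  all (fun a => all (fun b => (a != b) ==>
      stack_le (code_colour (nth 0 s a) a) (code_rank (nth 0 s a))
               (code_colour (nth 0 t b) b) (code_rank (nth 0 t b)).+1)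
    (iota 0 3)) (iota 0 3).

Definition all_states : seq (seq nat) :=
  [seq s <- flatten [seq [seq [:: a; b; c] | b <- iota 0 5, c <- iota 0 5] | a <- iota 0 5]
   | state_ok s].

Definition step_up (S : seq (seq nat)) : seq (seq nat) :=
  [seq t <- all_states | has (states_compat^~ t) S].
Definition step_down (S : seq (seq nat)) : seq (seq nat) :=
  [seq s <- all_states | has (states_compat s) S].

Definition reach_up (k : nat) : seq (seq nat) :=
  iter k step_up [seq s <- all_states | 4 \notin s].
Definition reach_down (k : nat) : seq (seq nat) :=
  iter k step_down [seq s <- all_states | 3 \notin s].

(* The map rotates the colours of the rank. *)
Definition rotation_state (s : seq nat) : bool := (s == [:: 1; 2; 0]) || (s == [:: 2; 0; 1]).

Lemma reach_check :
  [/\ reach_up 3 = reach_up 0, reach_down 3 = reach_down 0 &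
      all (fun k => all (fun m => ((k + m) %% 3 != 0) ==>
        all rotation_state [seq s <- reach_up k | s \in reach_down m]) (iota 0 3)) (iota 0 3)].
Proof. by split; vm_compute. Qed.

Lemma state_ok_all s : state_ok s -> s \in all_states.
Proof.
case: s => [|a [|b [|c [|? ?]]]] // sok; rewrite mem_filter sok andTb.
have [a5 b5 c5] : [/\ a < 5, b < 5 & c < 5].
  by move: sok => /andP[_] /= /and4P[/andP[-> _] /andP[-> _] /andP[-> _] _].
apply/flattenP; exists [seq [:: a; b'; c'] | b' <- iota 0 5, c' <- iota 0 5].
  by apply/mapP; exists a; rewrite ?mem_iota.
by apply/allpairsP; exists (b, c); split; rewrite // mem_iota.
Qed.

Lemma iter_mod (A : Type) (f : A -> A) x p k :
  iter p f x = x -> iter k f x = iter (k %% p) f x.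
Proof.
move=> fpx; rewrite {1}(divn_eq k p) addnC iterD; congr iter.
by elim: (k %/ p) => //= q IH; rewrite mulSn iterD IH.
Qed.

Lemma reach_rotation k m s : (k + m) %% 3 != 0 ->
  s \in reach_up k -> s \in reach_down m -> rotation_state s.
Proof.
have [up3 down3 /allP rot] := reach_check; move=> km.
rewrite (iter_mod k up3 : reach_up k = _) (iter_mod m down3 : reach_down m = _) => sk sm.
have k3 : k %% 3 \in iota 0 3 by rewrite mem_iota ltn_pmod.
have m3 : m %% 3 \in iota 0 3 by rewrite mem_iota ltn_pmod.
have km3 : (k %% 3 + m %% 3) %% 3 != 0 by rewrite modnDm.
move/allP: (rot _ k3) => /(_ _ m3) /implyP /(_ km3) /allP /(_ s); apply.
rewrite mem_filter; apply/andP; split; [exact: sm | exact: sk].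
Qed.

Lemma rotation_state_surj s b : rotation_state s -> b < 3 ->
  exists2 a, a < 3 & nth 0 s a = b.
Proof.
by case/orP=> /eqP ->; case: b => [|[|[|]]] // _;
  [exists 2 | exists 0 | exists 1 | exists 1 | exists 2 | exists 0].
Qed.

(** * A retract when 3 divides the rank *)

(* The retract keeps colours 0 and 1 on the ranks divisible by 3 and colour 2
   on the other ranks; every other point is sent to a neighbour in it. *)
Definition in_retract (a k : nat) : bool := if k %% 3 == 0 then a != 2 else a == 2.

Definition retract_coords (a k : nat) : nat * nat :=
  match k %% 3, a with
  | 0, 2 => (0, k)
  | 1, 0 => (2, k.+1)
  | 1, 1 => (0, k.-1)
  | 2, 0 => (2, k.-1)
  | 2, 1 => (0, k.+1)
  | _, _ => (a, k)
  end.

Lemma retract_coords_mono a b k l : a < 3 -> b < 3 -> stack_le a k b l ->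
  stack_le (retract_coords a k).1 (retract_coords a k).2
           (retract_coords b l).1 (retract_coords b l).2.
Proof.
rewrite /retract_coords /stack_le /stack_lt.
case: a => [|[|[|a]]] // _; case: b => [|[|[|b]]] // _;
case km: (k %% 3) => [|[|[|m]]]; case lm: (l %% 3) => [|[|[|m']]] /=; lia.
Qed.

Lemma retract_coords_in a k : a < 3 ->
  in_retract (retract_coords a k).1 (retract_coords a k).2.
Proof.
rewrite /retract_coords /in_retract; case: a => [|[|[|a]]] // _;
case km: (k %% 3) => [|[|[|m]]] /=; case: eqP => /=; lia.
Qed.

Lemma retract_coords_id a k : a < 3 -> in_retract a k -> retract_coords a k = (a, k).
Proof.
rewrite /retract_coords /in_retract; case: a => [|[|[|a]]] // _;
case km: (k %% 3) => [|[|[|m]]] //=; lia.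
Qed.

Lemma retract_coords_colour_lt a k : a < 3 -> (retract_coords a k).1 < 3.
Proof.
by rewrite /retract_coords; case: a => [|[|[|a]]] // _; case: (k %% 3) => [|[|[|m]]].
Qed.

Lemma retract_coords_rank_le a k n : 3 %| n -> k <= n -> (retract_coords a k).2 <= n.
Proof.
by rewrite /retract_coords; case: a => [|[|[|a]]]; case km: (k %% 3) => [|[|[|m]]] /=; lia.
Qed.

(* The retract is the ordinal sum of the two-element antichains
   {(0, 3m), (1, 3m)} and {(2, 3m + 1), (2, 3m + 2)}. *)
Definition tower_index (k : nat) : nat := 2 * (k %/ 3) + (k %% 3 != 0).
Definition tower_bit (a k : nat) : bool := if k %% 3 == 0 then a == 1 else k %% 3 == 2.

Lemma tower_index_lt k n : 3 %| n -> k <= n -> tower_index k < (2 * (n %/ 3)).+1.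
Proof. rewrite /tower_index; case: eqP => /=; lia. Qed.

Lemma tower_lt a b k l : a < 3 -> b < 3 -> in_retract a k -> in_retract b l ->
  stack_lt a k b l = (tower_index k < tower_index l).
Proof.
rewrite /in_retract /stack_lt /tower_index; case: a => [|[|[|a]]] // _; case: b => [|[|[|b]]] // _;
case: (k %% 3 =P 0) => k3; case: (l %% 3 =P 0) => l3 //= _ _; apply/idP/idP; lia.
Qed.

Lemma tower_inj a b k l : a < 3 -> b < 3 -> in_retract a k -> in_retract b l ->
  tower_index k = tower_index l -> tower_bit a k = tower_bit b l -> a = b /\ k = l.
Proof.
rewrite /in_retract /tower_index /tower_bit; case: a => [|[|[|a]]] // _;
case: b => [|[|[|b]]] // _; case: (k %% 3 =P 0) => k3; case: (l %% 3 =P 0) => l3 /=;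
case: (k %% 3 =P 2) => k2; case: (l %% 3 =P 2) => l2 //=; lia.
Qed.

Lemma tower_surj i (b : bool) n : 3 %| n -> i < (2 * (n %/ 3)).+1 ->
  exists a k, [/\ a < 3, k <= n, in_retract a k, tower_index k = i & tower_bit a k = b].
Proof.
move=> n3 i_lt; rewrite /in_retract /tower_index /tower_bit.
exists (if odd i then 2 else b), (3 * i./2 + (if odd i then b.+1 else 0)).
case: b; case: (boolP (odd i)) => io /=; repeat case: ifP => /eqP ?; split; lia.
Qed.

(** * Retracts and automorphisms of the stack *)

Section StackModel.
Variables (T : finType) (lt : rel T) (n : nat) (cl : T -> 'I_3) (rk : T -> nat).
Hypothesis coords : stack_coords lt n cl rk.

Let rk_le x : rk x <= n. Proof. by case: coords. Qed.
Let coords_inj x y : rk x = rk y -> cl x = cl y -> x = y.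
Proof. by case: coords => _ inj _ _; apply: inj. Qed.
Let coords_surj (a : 'I_3) k : k <= n -> exists2 x, rk x = k & cl x = a.
Proof. by case: coords => _ _ surj _; apply: surj. Qed.
Let lt_coords x y : lt x y = stack_lt (cl x) (rk x) (cl y) (rk y).
Proof. by case: coords. Qed.

(* [x0] is only a fallback, irrelevant when [k <= n]. *)
Definition coord_pt (x0 : T) (a : 'I_3) (k : nat) : T :=
  odflt x0 [pick x | (rk x == k) && (cl x == a)].

Lemma coord_ptP x0 a k : k <= n -> rk (coord_pt x0 a k) = k /\ cl (coord_pt x0 a k) = a.
Proof.
move=> kn; rewrite /coord_pt; case: pickP => [x /andP[/eqP -> /eqP ->] //|none].
by have [x rx cx] := coords_surj a kn; move: (none x); rewrite rx cx !eqxx.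
Qed.

Lemma leP_coords x y : Defs.leP lt x y = stack_le (cl x) (rk x) (cl y) (rk y).
Proof.
rewrite /Defs.leP /stack_le lt_coords; congr (_ || _).
apply/eqP/andP => [->|[/eqP cxy /eqP rxy]]; first by rewrite !eqxx.
by apply: coords_inj => //; apply/val_inj.
Qed.

Lemma lt_rk x y : lt x y -> rk x < rk y.
Proof. by rewrite lt_coords /stack_lt => /orP[|/andP[/eqP -> _]]; lia. Qed.

Definition rotate (x : T) : T := coord_pt x (ordS (cl x)) (rk x).

Lemma rotateP x : rk (rotate x) = rk x /\ cl (rotate x) = ordS (cl x).
Proof. exact: coord_ptP. Qed.

Lemma stack_automorphic : automorphic lt.
Proof.
exists rotate; split=> [x _|]; first by rewrite inE.
split=> [x y _ _ rxy|].
  have [rx cx] := rotateP x; have [ry cy] := rotateP y.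
  by apply: coords_inj; [rewrite -rx rxy | apply: ordS3_inj; rewrite -cx rxy].
split=> [y _|].
  have [rz cz] := coord_ptP y (ordS (ordS (cl y))) (rk_le y).
  exists (coord_pt y (ordS (ordS (cl y))) (rk y)); rewrite ?inE //.
  have [rr cr] := rotateP (coord_pt y (ordS (ordS (cl y))) (rk y)).
  by apply: coords_inj; rewrite ?rr ?rz // cr cz ordS3K.
split=> [x y _ _|x _].
  have [rx cx] := rotateP x; have [ry cy] := rotateP y.
  by rewrite !lt_coords rx ry cx cy /stack_lt !val_eqE (inj_eq ordS3_inj).
have [_ cx] := rotateP x; apply: contra_neq (ordS3_neq (cl x)) => e.
by rewrite -cx e.
Qed.

Lemma no_ascending_chain (u : nat -> T) : ~ (forall m, lt (u m) (u m.+1)).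
Proof.
move=> up; have rk_u m : m <= rk (u m).
  by elim: m => // m IH; have := lt_rk (up m); lia.
by have := rk_u n.+1; have := rk_le (u n.+1); lia.
Qed.

Lemma no_descending_chain (u : nat -> T) : ~ (forall m, lt (u m.+1) (u m)).
Proof.
move=> down; have rk_u m : rk (u m) + m <= rk (u 0).
  by elim: m => [|m IH]; [rewrite addn0 | have := lt_rk (down m); lia].
by have := rk_u n.+1; have := rk_le (u 0); lia.
Qed.

Section FixedPointFreeMap.
Variable h : T -> T.
Hypothesis h_mono : forall x y, Defs.leP lt x y -> Defs.leP lt (h x) (h y).
Hypothesis h_fpf : forall x, h x != x.

Lemma map_lt_step x y : lt x y -> h x != h y -> lt (h x) (h y).
Proof.
move=> xy hxy; have : Defs.leP lt (h x) (h y) by apply: h_mono; rewrite /Defs.leP xy orbT.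
by rewrite /Defs.leP (negbTE hxy).
Qed.

Lemma map_not_lt_image x : ~~ lt x (h x).
Proof.
apply/negP => x_hx; apply: (@no_ascending_chain (fun m => iter m h x)) => m.
elim: m => // m IH; rewrite !iterS.
by apply: map_lt_step; rewrite // eq_sym h_fpf.
Qed.

Lemma map_not_gt_image x : ~~ lt (h x) x.
Proof.
apply/negP => hx_x; apply: (@no_descending_chain (fun m => iter m h x)) => m.
elim: m => // m IH; rewrite !iterS.
by apply: map_lt_step; rewrite // h_fpf.
Qed.

Definition move_code (x : T) : nat :=
  if rk (h x) == rk x then nat_of_ord (cl (h x)) else if rk (h x) == (rk x).+1 then 3 else 4.

Lemma move_codeP x : [/\ cl (h x) = code_colour (move_code x) (cl x) :> nat,
  rk (h x) + 1 = rk x + code_rank (move_code x) & code_ok (move_code x) (cl x)].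
Proof.
have := map_not_lt_image x; have := map_not_gt_image x.
rewrite !lt_coords /move_code /code_colour /code_rank /code_ok /stack_lt !negb_or !negb_and.
have hx3 := ltn_ord (cl (h x)); have x3 := ltn_ord (cl x).
case: (eqVneq (rk (h x)) (rk x)) => [rhx _ _|rhx].
  have chx : cl (h x) != cl x by apply: contra_neq (h_fpf x) => /(coords_inj rhx).
  by rewrite hx3 val_eqE chx andbT; split=> //; lia.
case: (eqVneq (rk (h x)) (rk x).+1) => [rhx' _|rhx'] /=.
  by move=> /andP[_] /negPn/eqP ->; split=> //; lia.
move=> /andP[hx_x /orP[x_hx|/negPn/eqP ->]] /andP[x_hx' _]; first by move: x_hx; lia.
by split=> //; lia.
Qed.

Definition state_at (x : T) : seq nat :=
  [seq move_code (coord_pt x (inord a) (rk x)) | a <- iota 0 3].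

Lemma nth_state_at x a : a < 3 ->
  nth 0 (state_at x) a = move_code (coord_pt x (inord a) (rk x)).
Proof. by move=> a3; rewrite (nth_map 0) ?size_iota ?nth_iota. Qed.

Lemma coord_pt_level x a : a < 3 ->
  rk (coord_pt x (inord a) (rk x)) = rk x /\ cl (coord_pt x (inord a) (rk x)) = a :> nat.
Proof. by move=> a3; have [-> ->] := coord_ptP x (inord a) (rk_le x); rewrite inordK. Qed.

Lemma state_at_ok x : state_ok (state_at x).
Proof.
rewrite /state_ok size_map size_iota eqxx; apply/allP => a; rewrite mem_iota => /andP[_ a3].
rewrite nth_state_at //; have [_ cp] := coord_pt_level x a3.
by have [_ _] := move_codeP (coord_pt x (inord a) (rk x)); rewrite cp.
Qed.

Lemma state_at_compat x y : rk y = (rk x).+1 -> states_compat (state_at x) (state_at y).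
Proof.
move=> ry; apply/allP => a; rewrite mem_iota => /andP[_ a3].
apply/allP => b; rewrite mem_iota => /andP[_ b3]; apply/implyP => ab.
rewrite !nth_state_at //.
set p := coord_pt x (inord a) (rk x); set q := coord_pt y (inord b) (rk y).
have [rp cp] := coord_pt_level x a3; have [rq cq] := coord_pt_level y b3.
have [c_p r_p _] := move_codeP p; have [c_q r_q _] := move_codeP q.
have : Defs.leP lt p q.
  by rewrite leP_coords rp rq cp cq; rewrite ry /stack_le /stack_lt eqxx ab !orbT.
move/h_mono; rewrite leP_coords -cp -cq -c_p -c_q -(stack_le_addr _ _ _ _ 1) r_p r_q rp rq ry.
by rewrite addSn !(addnC (rk x)) -addSn stack_le_addr.
Qed.

Lemma state_at_bottom x : rk x = 0 -> 4 \notin state_at x.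
Proof.
move=> rx; apply/mapP => -[a]; rewrite mem_iota => /andP[_ a3] e.
have [rp _] := coord_pt_level x a3.
have [_ +] := move_codeP (coord_pt x (inord a) (rk x)); rewrite -e rp rx /code_rank /=.
lia.
Qed.

Lemma state_at_top x : rk x = n -> 3 \notin state_at x.
Proof.
move=> rx; apply/mapP => -[a]; rewrite mem_iota => /andP[_ a3] e.
have [rp _] := coord_pt_level x a3.
have := rk_le (h (coord_pt x (inord a) (rk x))).
have [_ +] := move_codeP (coord_pt x (inord a) (rk x)); rewrite -e rp rx /code_rank /=.
lia.
Qed.

Lemma state_reach_up x : state_at x \in reach_up (rk x).
Proof.
suff: forall k x, rk x = k -> state_at x \in reach_up k by apply.
move=> {x}; elim=> [|k IH] x rx.
  by rewrite -[reach_up 0]/(filter _ _) mem_filter state_at_bottom ?state_ok_all ?state_at_ok.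
have kn : k <= n by have := rk_le x; lia.
have [y ry _] := coords_surj ord0 kn.
rewrite /reach_up iterS -/(reach_up k) mem_filter (state_ok_all (state_at_ok x)) andbT.
by apply/hasP; exists (state_at y); [apply: IH | apply: state_at_compat; rewrite rx ry].
Qed.

Lemma state_reach_down x : state_at x \in reach_down (n - rk x).
Proof.
suff: forall m x, n - rk x = m -> state_at x \in reach_down m by apply.
move=> {x}; elim=> [|m IH] x rx.
  rewrite -[reach_down 0]/(filter _ _) mem_filter state_at_top ?state_ok_all ?state_at_ok //.
  by have := rk_le x; lia.
have xn : (rk x).+1 <= n by lia.
have [y ry _] := coords_surj ord0 xn.
rewrite /reach_down iterS -/(reach_down m) mem_filter (state_ok_all (state_at_ok x)) andbT.
by apply/hasP; exists (state_at y); [apply: IH; lia | apply: state_at_compat].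
Qed.

Lemma map_surj : ~~ (3 %| n) -> forall y, exists x, h x = y.
Proof.
move=> n3 y; have rky : (rk y + (n - rk y)) %% 3 != 0 by rewrite subnKC ?rk_le.
have rot := reach_rotation rky (state_reach_up y) (state_reach_down y).
have [a a3] := rotation_state_surj rot (ltn_ord (cl y)); rewrite nth_state_at // => e.
exists (coord_pt y (inord a) (rk y)); have [rp cp] := coord_pt_level y a3.
have [+ +] := move_codeP (coord_pt y (inord a) (rk y)); rewrite e /code_colour /code_rank ltn_ord.
by move=> c r _; apply: coords_inj; [lia | apply/val_inj].
Qed.

End FixedPointFreeMap.

Lemma retract_automorphic_full Q :
  ~~ (3 %| n) -> is_retract lt Q -> automorphic_on lt Q -> Q = [set: T].
Proof.
move=> n3 [r [r_mono [rQ r_id]]] [g [gQ [_ [_ [g_lt g_fpf]]]]].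
have h_mono x y : Defs.leP lt x y -> Defs.leP lt (g (r x)) (g (r y)).
  move/r_mono; rewrite /Defs.leP => /orP[/eqP->|rxy]; first by rewrite eqxx.
  by rewrite -g_lt ?rxy ?orbT.
have h_fpf x : g (r x) != x.
  apply/eqP => gx; have xQ : x \in Q by rewrite -gx gQ.
  by move: (g_fpf _ (rQ x)); rewrite gx r_id // eqxx.
apply/setP => y; rewrite inE; have [x <-] := map_surj h_mono h_fpf n3 y; exact: gQ.
Qed.

Section DivisibleRank.
Hypothesis n3 : 3 %| n.

Definition retract_set : {set T} := [set x | in_retract (cl x) (rk x)].

Definition retraction (x : T) : T :=
  coord_pt x (inord (retract_coords (cl x) (rk x)).1) (retract_coords (cl x) (rk x)).2.

Lemma retractionP x : rk (retraction x) = (retract_coords (cl x) (rk x)).2 /\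
  cl (retraction x) = (retract_coords (cl x) (rk x)).1 :> nat.
Proof.
have := coord_ptP x (inord (retract_coords (cl x) (rk x)).1)
  (retract_coords_rank_le (cl x) n3 (rk_le x)).
by case=> -> ->; rewrite inordK ?retract_coords_colour_lt.
Qed.

Lemma retract_set_retract : is_retract lt retract_set.
Proof.
exists retraction; split=> [x y|]; last split=> [x|q].
- have [rx cx] := retractionP x; have [ry cy] := retractionP y.
  by rewrite !leP_coords rx ry cx cy; apply: retract_coords_mono.
- by have [rx cx] := retractionP x; rewrite inE rx cx retract_coords_in.
- rewrite inE => qQ; have [rq cq] := retractionP q.
  rewrite retract_coords_id // in rq cq; apply: coords_inj => //; exact/val_inj.
Qed.

Lemma retract_set_proper : retract_set != [set: T].
Proof.
have [x rx cx] := coords_surj (inord 2) (leq0n n).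
by apply/eqP => /setP /(_ x); rewrite !inE rx cx inordK.
Qed.

Lemma retract_set_tower : iso_tower_of_sections lt retract_set.
Proof.
pose K := (2 * (n %/ 3)).+1; pose S := fun _ : 'I_K => bool : finType.
exists K; split=> //; exists S, (fun _ _ _ => false); split.
  by move=> i; split=> //; left; rewrite card_bool.
have idxK x : tower_index (rk x) < K := tower_index_lt n3 (rk_le x).
exists (fun x => existT S (inord (tower_index (rk x))) (tower_bit (cl x) (rk x))).
split; last split.
- move=> x y; rewrite !inE => xQ yQ e.
  have := congr1 (fun s => val (tag s)) e; rewrite /= !inordK // => eidx.
  have ebit : tower_bit (cl x) (rk x) = tower_bit (cl y) (rk y).
    exact: (congr1 (fun s : {i : 'I_K & S i} => (tagged s : bool)) e).
  have [cxy rxy] := tower_inj (ltn_ord _) (ltn_ord _) xQ yQ eidx ebit.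
  by apply: coords_inj => //; apply/val_inj.
- case=> i b; have [a [k [a3 kn kQ ki kb]]] := tower_surj b n3 (ltn_ord i).
  have [x rx cx] := coords_surj (inord a) kn.
  exists x; first by rewrite inE rx cx inordK.
  rewrite rx cx inordK // ki kb; congr existT; exact/val_inj/inordK.
- move=> x y; rewrite !inE => xQ yQ.
  by rewrite lt_coords /ordsum_lt /= andbF orbF !inordK // tower_lt.
Qed.

End DivisibleRank.

Lemma proper_tower_retract : 3 %| n ->
  exists Q : {set T}, Q != [set: T] /\ is_retract lt Q /\ iso_tower_of_sections lt Q.
Proof.
by move=> n3; exists retract_set; split; [|split]; [exact: retract_set_proper
  | exact: retract_set_retract | exact: retract_set_tower].
Qed.

End StackModel.

(** * Towers of sections *)

Definition fpf_automorphism (S : finType) (ltS : rel S) (g : S -> S) : Prop :=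
  [/\ injective g, {mono g : x y / ltS x y} & forall x, g x != x].

Lemma antichain2_fpf_automorphism (S : finType) (ltS : rel S) :
  #|S| = 2 -> (forall x y, ~~ ltS x y) -> exists g, fpf_automorphism ltS g.
Proof.
move=> S2 anti; have /card_gt1P [x [y [_ _ xy]]] : 1 < #|S| by rewrite S2.
exists (tperm x y); split=> [||z]; first exact: perm_inj.
  by move=> z w; rewrite !(negbTE (anti _ _)).
have : z \in [set x; y].
  rewrite (_ : [set x; y] = [set: S]) ?inE //.
  by apply/eqP; rewrite eqEcard subsetT cardsT S2 cards2 xy.
by rewrite !inE => /orP[] /eqP ->; rewrite ?tpermL ?tpermR // eq_sym.
Qed.

Lemma section_fpf_automorphism (S : finType) (ltS : rel S) :
  is_section ltS -> exists g, fpf_automorphism ltS g.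
Proof.
case=> _ [[S2 anti]|[m [_ [g [[g' gK g'K] [_ [_ [g_shift _]]]]]]]].
  exact: antichain2_fpf_automorphism.
pose rot (z : S) := g (ordS (g' z).1, (g' z).2).
have rotE i k : rot (g (i, k)) = g (ordS i, k) by rewrite /rot gK.
exists rot; split.
- move=> z w; rewrite -(g'K z) -(g'K w); case: (g' z) (g' w) => [i k] [j l].
  rewrite !rotE => /(can_inj gK) e.
  by rewrite (ordS3_inj (congr1 fst e)) [k](congr1 snd e).
- move=> z w; rewrite -(g'K z) -(g'K w); case: (g' z) (g' w) => [i k] [j l].
  rewrite !rotE; apply/idP/idP; last exact: g_shift.
  by move=> /g_shift /g_shift; rewrite !ordS3K.
- move=> z; rewrite -(g'K z); case: (g' z) => i k; rewrite rotE.
  by apply: contra_neq (ordS3_neq i) => /(can_inj gK) /(congr1 fst).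
Qed.

Lemma ordsum_fpf_automorphism (k : nat) (S : 'I_k -> finType) (lts : forall i, rel (S i)) :
  (forall i, exists g, fpf_automorphism (lts i) g) ->
  exists g, fpf_automorphism (ordsum_lt lts) g.
Proof.
case/fin_all_exists => gs gsP.
exists (fun s => Tagged S (gs (tag s) (tagged s))); split.
- case=> i a [j b] /= e; have ij : i = j := congr1 tag e; subst j.
  by have [gi _ _] := gsP i; rewrite (gi _ _ (eq_from_Tagged e)).
- case=> i a [j b]; rewrite /ordsum_lt /=; congr (_ || _).
  case: (eqVneq j i) => [ji|//]; subst j; rewrite !tagged_asE.
  by have [_ gm _] := gsP i; apply: gm.
- case=> i a /=; have [_ _ gfp] := gsP i.
  by apply: contra_neq (gfp a); apply: eq_from_Tagged.
Qed.

Lemma iso_fpf_automorphic (T S : finType) (lt : rel T) (A : {set T}) (ltS : rel S) :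
  iso_on lt A ltS -> (exists g, fpf_automorphism ltS g) -> automorphic_on lt A.
Proof.
case=> F [F_inj [F_surj F_lt]] [g [g_inj g_mono g_fpf]].
pose f x := odflt x [pick y in A | F y == g (F x)].
have fP x : f x \in A /\ F (f x) = g (F x).
  rewrite /f; case: pickP => [y /andP[yA /eqP e] //|none].
  by have [y yA e] := F_surj (g (F x)); move: (none y); rewrite yA e eqxx.
exists f; split=> [x _|]; first by case: (fP x).
split=> [x y xA yA fxy|].
  by apply: F_inj => //; apply: g_inj; case: (fP x) => _ <-; case: (fP y) => _ <-; rewrite fxy.
split=> [y yA|].
  have /codomP [t Fy] := injF_onto g_inj (F y).
  have [x xA Fx] := F_surj t; exists x => //.
  by case: (fP x) => fxA Ffx; apply: F_inj; rewrite // Ffx Fx.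
split=> [x y xA yA|x xA].
  by case: (fP x) => fxA Ffx; case: (fP y) => fyA Ffy; rewrite !F_lt // Ffx Ffy g_mono.
by case: (fP x) => _ Ffx; apply: contra_neq (g_fpf (F x)) => fx; rewrite -Ffx fx.
Qed.

Lemma tower_automorphic (T : finType) (lt : rel T) (A : {set T}) :
  iso_tower_of_sections lt A -> automorphic_on lt A.
Proof.
case=> k [_ [S [lts [secs iso]]]]; apply: (iso_fpf_automorphic iso).
by apply: ordsum_fpf_automorphism => i; apply: section_fpf_automorphism.
Qed.

Theorem proposition5p11 (T : finType) (lt : rel T) (n : nat) :
  is_spo lt -> six_stack lt n ->
  ((exists Q : {set T}, Q != [set: T] /\ is_retract lt Q /\
                        iso_tower_of_sections lt Q) <-> (3 %| n))
  /\ (minimal_automorphic lt <-> ~~ (3 %| n)).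
Proof.
move=> spo stack; have [cl coords] := six_stack_coords spo stack.
have no_retract Q : ~~ (3 %| n) -> Q != [set: T] -> is_retract lt Q -> ~ automorphic_on lt Q.
  by move=> n3 QT QR /(retract_automorphic_full coords n3 QR) QF; rewrite QF eqxx in QT.
split; split.
- case=> Q [QT [QR /tower_automorphic QA]]; apply/negPn/negP => n3.
  exact: no_retract n3 QT QR QA.
- exact: proper_tower_retract coords.
- case=> _ min; apply/negP => /(proper_tower_retract coords) [Q [QT [QR /tower_automorphic QA]]].
  exact: min Q QT QR QA.
- by move=> n3; split=> [|Q QT QR]; [exact: stack_automorphic coords | exact: no_retract].
Qed.
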